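(* Let $L_0,\ldots,L_{m-1}$ be Laplacian matrices of non-negatively weighted digraphs on the node set $\{1,\ldots,N\}$, $N\ge2$. Let $\bar{\Delta}=[\mathbf{1}_{N-1},\,-I_{N-1}]\in\mathbb{R}^{(N-1)\times N}$ and $\Delta=\begin{bmatrix}1&0_{1\times(N-1)}\\ \mathbf{1}_{N-1}&-I_{N-1}\end{bmatrix}$ (so that $\Delta\Delta=I_N$). For each $j$ write $\Delta L_j\Delta=\begin{bmatrix}0&*\\0&\tilde{L}_j\end{bmatrix}$ with $\tilde{L}_j\in\mathbb{R}^{(N-1)\times(N-1)}$. If the digraph whose Laplacian is $\sum_{j=0}^{m-1}L_j$ contains a directed spanning tree, then $$\bigcap_{j=0}^{m-1}\mathrm{Eig}(\tilde{L}_j)=\{\mathbf{0}\},$$ where $\mathrm{Eig}(M)$ denotes the subspace spanned by the generalized eigenvectors of $M$ associated with the eigenvalue $0$.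
   Context: A weighted digraph on $\{1,\ldots,N\}$ has adjacency matrix $W=[a_{ij}]$ with $a_{ij}\ge0$, $a_{ii}=0$, and $a_{ij}>0$ iff $(j,i)$ is an edge; its Laplacian is $L=\mathrm{diag}\{\sum_j a_{1j},\ldots,\sum_j a_{Nj}\}-W$, so $L\mathbf{1}_N=0$. A digraph contains a directed spanning tree if some node has a directed path (sequence of edges $(i_1,i_2),(i_2,i_3),\ldots$) to every other node. A generalized eigenvector of $M$ for eigenvalue $\lambda$ is a nonzero $v$ with $(M-\lambda I)^qv=0$ for some positive integer $q$. *)

From HB Require Import structures.
From mathcomp Require Import all_boot all_order all_algebra.
Set Implicit Arguments. Unset Strict Implicit. Unset Printing Implicit Defensive.
Import Order.TTheory GRing.Theory Num.Theory.
Local Open Scope ring_scope.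

Definition adjacency {R : realFieldType} {N : nat} (W : 'M[R]_N) : Prop :=
  (forall i j, 0 <= W i j) /\ (forall i, W i i = 0).

Definition laplacian {R : realFieldType} {N : nat} (W : 'M[R]_N) : 'M[R]_N :=
  diag_mx (\row_i \sum_k W i k) - W.

Definition edge {R : realFieldType} {N : nat} (W : 'M[R]_N) : rel 'I_N :=
  fun x y => 0 < W y x.

Definition has_spanning_tree {R : realFieldType} {N : nat} (W : 'M[R]_N) : Prop :=
  exists r : 'I_N, forall i : 'I_N, connect (edge W) r i.

Definition Delta {R : realFieldType} (n : nat) : 'M[R]_(1 + n) :=
  block_mx (1 : 'M[R]_1) (0 : 'M[R]_(1, n)) (const_mx 1 : 'M[R]_(n, 1)) (- 1%:M).

Definition Ltilde {R : realFieldType} (n : nat) (L : 'M[R]_(1 + n)) : 'M[R]_n :=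
  drsubmx (Delta n *m L *m Delta n).

Definition gen_eigvec0 {R : realFieldType} {n : nat} (M : 'M[R]_n) (v : 'cV[R]_n) : Prop :=
  v != 0 /\ exists q : nat, (0 < q)%N /\ (M - 0%:M) ^+ q *m v = 0.

Definition Eig0 {R : realFieldType} {n : nat} (M : 'M[R]_n) : 'cV[R]_n -> Prop :=
  fun v => exists (k : nat) (c : 'I_k -> R) (w : 'I_k -> 'cV[R]_n),
    (forall i, gen_eigvec0 M (w i)) /\ v = \sum_(i < k) c i *: w i.

From HB Require Import structures.
From mathcomp Require Import all_boot all_order all_algebra.
Set Implicit Arguments. Unset Strict Implicit. Unset Printing Implicit Defensive.
Import Order.TTheory GRing.Theory Num.Theory.
Local Open Scope ring_scope.

(* For a Laplacian L with nonnegative weights, (L x)_i = sum_k a_ik (x_i - x_k): at a maximum of x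
   where L x vanishes, x takes the same value at every in-neighbour. Propagating a maximum back to
   the root of a spanning tree shows that ker L consists of constants. Choosing, among the maxima of
   y = L x, one minimising x shows that L y = 0 forces y <= 0, hence y = 0 by symmetry: ker L^q = ker L.
   Conjugation by Delta gives L (Delta [0; w]) = c 1 + Delta [0; Ltilde w], and L 1 = 0, so for a
   generalised eigenvector w of Ltilde_j the lift x = Delta [0; w] satisfies L_j^(q+1) x = 0, hence
   L_j x = 0. Summing over j, x is in the kernel of the Laplacian of the union graph, hence constant;
   its first coordinate is 0, so x = 0 and w = 0. *)

Section LaplacianKernel.
Variables (R : realFieldType) (N : nat) (W : 'M[R]_N).
Hypothesis W_ge0 : forall i j, 0 <= W i j.
Implicit Types x y : 'cV[R]_N.

Local Notation L := (laplacian W).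

Lemma laplacian_mulmxE x i : (L *m x) i 0 = \sum_k W i k * (x i 0 - x k 0).
Proof.
rewrite /laplacian mulmxBl mul_diag_mx !mxE mulr_suml -sumrB.
by apply: eq_bigr => k _; rewrite mulrBr.
Qed.

Lemma laplacian_mul_const (c : R) : L *m (const_mx c : 'cV_N) = 0.
Proof.
apply/matrixP => i j; rewrite ord1 laplacian_mulmxE [RHS]mxE.
by apply: big1 => k _; rewrite !mxE subrr mulr0.
Qed.

Lemma laplacian_max_edge x i k :
  (L *m x) i 0 = 0 -> (forall j, x j 0 <= x i 0) -> edge W k i -> x k 0 = x i 0.
Proof.
rewrite laplacian_mulmxE => Lx_i x_max W_ik.
have : W i k * (x i 0 - x k 0) = 0.
  by apply: (psumr_eq0P _ Lx_i) => // l _; rewrite mulr_ge0 ?subr_ge0.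
by move/eqP; rewrite mulf_eq0 gt_eqF //= subr_eq0 => /eqP.
Qed.

Lemma laplacian_ker_root_max x r :
  L *m x = 0 -> (forall i, connect (edge W) r i) -> forall j, x j 0 <= x r 0.
Proof.
move=> Lx0 root.
have [i _ x_max] := arg_maxP (fun i => x i 0) (isT : predT r).
have {}x_max j : x j 0 <= x i 0 by exact: x_max.
have /connectP[p] := root i; elim: p r {root} => [|k p IH] r /=; first by move=> _ <-.
case/andP=> r_k k_p i_last; have k_max := IH k k_p i_last.
by rewrite (laplacian_max_edge _ k_max r_k) ?Lx0 ?mxE.
Qed.

Lemma laplacian_ker_const x r :
  L *m x = 0 -> (forall i, connect (edge W) r i) -> x = const_mx (x r 0).
Proof.
move=> Lx0 root; apply/matrixP => j l; rewrite ord1 mxE; apply/eqP.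
rewrite eq_le laplacian_ker_root_max //=.
have L_Nx0 : L *m - x = 0 by rewrite mulmxN Lx0 oppr0.
by have := laplacian_ker_root_max L_Nx0 root j; rewrite !mxE lerN2.
Qed.

Lemma laplacian_range_ker_le0 x i : L *m (L *m x) = 0 -> (L *m x) i 0 <= 0.
Proof.
set y := L *m x => Ly0.
have [i1 _ y_max] := arg_maxP (fun i => y i 0) (isT : predT i).
(* Among the maxima of y pick j minimising x: every term a_jk (x_j - x_k) of y_j is then <= 0. *)
pose P := [pred a | y a 0 == y i1 0].
have [j /eqP y_j x_min] := arg_minP (fun a => x a 0) (eqxx _ : P i1).
have y_j_max l : y l 0 <= y j 0 by rewrite y_j; exact: y_max.
apply: le_trans (y_j_max i) _; rewrite /y laplacian_mulmxE; apply: sumr_le0 => k _.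
have := W_ge0 j k; rewrite le_eqVlt => /predU1P[<- | W_jk]; first by rewrite mul0r.
rewrite pmulr_rle0 // subr_le0; apply: x_min; rewrite inE /= -y_j.
by rewrite (laplacian_max_edge _ y_j_max W_jk) ?Ly0 ?mxE.
Qed.

Lemma laplacian_ker_sqr x : L *m (L *m x) = 0 -> L *m x = 0.
Proof.
move=> LLx0; apply/matrixP => i l; rewrite ord1 [RHS]mxE; apply/eqP.
rewrite eq_le laplacian_range_ker_le0 //=.
have LLNx0 : L *m (L *m - x) = 0 by rewrite !mulmxN LLx0 oppr0.
by have := laplacian_range_ker_le0 i LLNx0; rewrite mulmxN mxE oppr_le0.
Qed.

Lemma laplacian_ker_exp x q : (0 < q)%N -> L ^+ q *m x = 0 -> L *m x = 0.
Proof.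
case: q => // q _; elim: q x => [|q IH] x; first by rewrite expr1.
rewrite exprSr -mulmxE -mulmxA => /IH; exact: laplacian_ker_sqr.
Qed.

End LaplacianKernel.

Lemma laplacianD (R : realFieldType) N (W V : 'M[R]_N) :
  laplacian (W + V) = laplacian W + laplacian V.
Proof.
apply/matrixP => i j; rewrite /laplacian !mxE.
under eq_bigr do rewrite mxE.
by rewrite big_split /= mulrnDl opprD addrACA.
Qed.

Lemma laplacian_sum (R : realFieldType) N m (W : 'I_m -> 'M[R]_N) :
  laplacian (\sum_(j < m) W j) = \sum_(j < m) laplacian (W j).
Proof.
apply: (big_morph _ (@laplacianD R N)).
by apply/matrixP => i j; rewrite /laplacian !mxE big1 ?mul0rn ?subr0 // => k _; rewrite mxE.
Qed.

Section DeltaReduction.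
Variables (R : realFieldType) (n : nat).

(* [Delta_lift *m w = Delta n *m col_mx 0 w] has first coordinate 0 and disagreement vector w. *)
Definition Delta_lift : 'M[R]_(1 + n, n) := col_mx 0 (- 1%:M).

Lemma DeltaK : Delta n *m Delta n = 1%:M :> 'M[R]_(1 + n).
Proof.
rewrite /Delta mulmx_block !mul1mx !mul0mx !mulmx0 !addr0 !add0r mulNmx mul1mx.
rewrite mulmx1 subrr mulNmx mulmxN mulmx1 opprK.
by rewrite -[X in block_mx X]/(1%:M : 'M[R]_1) -scalar_mx_block.
Qed.

Lemma Delta_mul_col0 k (a : 'M[R]_(1, k)) : Delta n *m col_mx a 0 = const_mx 1 *m a.
Proof.
rewrite /Delta mul_block_col !mulmx0 !addr0 mul1mx -col_mx_const mul_col_mx.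
congr col_mx; apply/matrixP => i j.
by rewrite !mxE big_ord1 !mxE mul1r ord1.
Qed.

Lemma Delta_mul_0col k (b : 'M[R]_(n, k)) : Delta n *m col_mx 0 b = Delta_lift *m b.
Proof.
by rewrite /Delta mul_block_col !mulmx0 !add0r mul_col_mx mul0mx mulNmx !mul1mx.
Qed.

Lemma mul_Delta_lift (L : 'M[R]_(1 + n)) :
  exists u : 'rV[R]_n, L *m Delta_lift = const_mx 1 *m u + Delta_lift *m Ltilde L.
Proof.
exists (ursubmx (Delta n *m L *m Delta n)).
have -> : L *m Delta_lift = Delta n *m (Delta n *m L *m Delta n *m col_mx 0 1%:M).
  by rewrite -[Delta_lift]mulmx1 -Delta_mul_0col !mulmxA DeltaK mul1mx.
rewrite -{1}[Delta n *m L *m Delta n]submxK mul_block_col !mulmx0 !add0r !mulmx1.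
rewrite -[ursubmx _ in LHS]addr0 -[drsubmx _ in LHS]add0r -add_col_mx mulmxDr.
by rewrite Delta_mul_col0 Delta_mul_0col.
Qed.

Lemma Delta_lift_const_eq0 (w : 'cV[R]_n) c :
  Delta_lift *m w = const_mx c -> w = 0.
Proof.
rewrite mul_col_mx mul0mx mulNmx mul1mx -col_mx_const => /eq_col_mx[/matrixP c0 Nw].
have := c0 0 0; rewrite !mxE => c_eq0.
by apply: oppr_inj; rewrite Nw -c_eq0 oppr0.
Qed.

End DeltaReduction.

Section LaplacianReduction.
Variables (R : realFieldType) (n : nat) (W : 'M[R]_(1 + n)).
Hypothesis W_ge0 : forall i j, 0 <= W i j.

Local Notation L := (laplacian W).
Local Notation Delta_lift := (Delta_lift R n).

Lemma laplacian_exp_Delta_lift k : exists u : 'rV[R]_n,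
  L ^+ k *m Delta_lift = const_mx 1 *m u + Delta_lift *m Ltilde L ^+ k.
Proof.
elim: k => [|k [u IH]]; first by exists 0; rewrite !expr0 mul1mx mulmx0 add0r mulmx1.
have [a La] := mul_Delta_lift L; exists (a *m Ltilde L ^+ k).
rewrite exprS -mulmxE -mulmxA IH mulmxDr mulmxA laplacian_mul_const mul0mx add0r.
by rewrite mulmxA La mulmxDl -!mulmxA exprS.
Qed.

Lemma laplacian_Delta_lift_ker (w : 'cV[R]_n) q :
  Ltilde L ^+ q *m w = 0 -> L *m (Delta_lift *m w) = 0.
Proof.
move=> Lq_w; have [u Lq] := laplacian_exp_Delta_lift q.
apply: (@laplacian_ker_exp _ _ W W_ge0 _ q.+1) => //.
rewrite exprS -mulmxE -mulmxA [L ^+ q *m _]mulmxA Lq mulmxDl.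
by rewrite -[Delta_lift *m _ *m w]mulmxA Lq_w mulmx0 addr0 !mulmxA laplacian_mul_const !mul0mx.
Qed.

Lemma Eig0_Ltilde_laplacian (v : 'cV[R]_n) : Eig0 (Ltilde L) v -> L *m (Delta_lift *m v) = 0.
Proof.
case=> k [c [w [gen_w ->]]]; rewrite !mulmx_sumr big1 // => i _.
have [_ [q [_]]] := gen_w i; rewrite raddf0 subr0 => /laplacian_Delta_lift_ker.
by rewrite -!scalemxAr => ->; rewrite scaler0.
Qed.

End LaplacianReduction.

Theorem lemma7 (R : realFieldType) (n m : nat) (Hn : (0 < n)%N)
  (W : 'I_m -> 'M[R]_(1 + n)) (L : 'I_m -> 'M[R]_(1 + n))
  (HW : forall j, adjacency (W j))
  (HL : forall j, L j = laplacian (W j))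
  (Htree : has_spanning_tree (\sum_(j < m) W j)) :
  forall v : 'cV[R]_n, (forall j : 'I_m, Eig0 (Ltilde (L j)) v) -> v = 0.
Proof.
move=> v Eig_v.
have sumW_ge0 a b : 0 <= (\sum_(j < m) W j) a b.
  by rewrite summxE sumr_ge0 // => j _; case: (HW j).
have Lv0 : laplacian (\sum_(j < m) W j) *m (Delta_lift R n *m v) = 0.
  rewrite laplacian_sum mulmx_suml big1 // => j _.
  by apply: Eig0_Ltilde_laplacian; [case: (HW j) | rewrite -HL].
have [r root] := Htree.
exact: Delta_lift_const_eq0 (laplacian_ker_const sumW_ge0 Lv0 root).
Qed.
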